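(* In the Dynamic Accountable Storage construction described in the context, with the server's IBLT tree built on the protected Cartesian tree, space usage is $O(\delta)$ at the client and $O(n+\delta n/\beta)$ at the server, where $n$ is the number of stored blocks.
   Context: The client stores $n$ key-block pairs at a server. The client keeps only an IBLT (Invertible Bloom Lookup Table: a table of $O(\delta)$ cells holding XOR-sums of keys, blocks and tags) of all her key-block-tag triples (her keys themselves are not counted). The server stores the $n$ key-block-tag triples and an IBLT tree: a protected Cartesian tree on the keys, in which each node stores an IBLT with $O(\delta)$ cells of all triples in its subtree. Protected Cartesian tree with parameter $\beta$: let $h'$ be a random hash from keys to $[0,1]$; for a set $S$ of $n'$ triples, the protected region $P(S)$ consists of elements whose rank (number of smaller keys in $S$) is $\le\beta/2$ or $>n'-\beta/2$, and $U(S)=S\setminus P(S)$; if $|S|\le\beta$ the tree is a single leaf holding $S$, otherwise the root pivot is the element of $U(S)$ with smallest $h'$ value and the subtrees are built recursively on the elements with smaller and larger keys. *)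

From mathcomp Require Import all_boot all_order all_algebra.
Set Implicit Arguments. Unset Strict Implicit. Unset Printing Implicit Defensive.
Import Order.TTheory GRing.Theory Num.Theory.

(* A key-block-tag triple: ((key, block), tag). Keys, blocks, tags are bit
   strings, modelled as nat with bitwise XOR (Nat.lxor). *)
Definition triple := ((nat * nat) * nat)%type.
Definition tkey (x : triple) : nat := x.1.1.
Definition tblock (x : triple) : nat := x.1.2.
Definition ttag (x : triple) : nat := x.2.

Record cell := Cell { keySum : nat; blockSum : nat; tagSum : nat }.
Definition cell0 := Cell 0 0 0.
Definition cell_add (x : triple) (c : cell) : cell :=
  Cell (Nat.lxor (tkey x) (keySum c)) (Nat.lxor (tblock x) (blockSum c))
       (Nat.lxor (ttag x) (tagSum c)).

Definition iblt := seq cell.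
Definition iblt_build (m : nat) (hs : seq (nat -> nat)) (S : seq triple) : iblt :=
  mkseq (fun i => foldr (fun x c =>
            if i \in [seq h (tkey x) %% m | h <- hs] then cell_add x c else c)
          cell0 S) m.

Definition rank (S : seq triple) (x : triple) : nat :=
  count (fun y => tkey y < tkey x) S.

(* Protected region with parameter beta: rank <= beta/2 or rank > n' - beta/2
   (stated without division/truncation by doubling). *)
Definition protected (beta : nat) (S : seq triple) (x : triple) : bool :=
  (2 * rank S x <= beta) || (2 * size S < 2 * rank S x + beta).

Definition unprotected (beta : nat) (S : seq triple) : seq triple :=
  [seq x <- S | ~~ protected beta S x].

Definition argmin_h (h' : nat -> rat) (s : seq triple) : option triple :=
  foldr (fun x acc => match acc with
                      | None => Some x
                      | Some y => if (h' (tkey y) < h' (tkey x))%R then Some y else Some x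
                      end) None s.

Inductive ptree :=
| PLeaf of seq triple
| PNode of triple & ptree & ptree.

Fixpoint pct_build_fuel (beta : nat) (h' : nat -> rat) (fuel : nat)
    (S : seq triple) : ptree :=
  match fuel with
  | 0 => PLeaf S
  | f.+1 =>
    if size S <= beta then PLeaf S else
    match argmin_h h' (unprotected beta S) with
    | None => PLeaf S
    | Some p =>
        PNode p (pct_build_fuel beta h' f [seq y <- S | tkey y < tkey p])
                (pct_build_fuel beta h' f [seq y <- S | tkey p < tkey y])
    end
  end.

(* Fuel size S suffices: each recursive call is on a strictly smaller set. *)
Definition pct_build beta h' S := pct_build_fuel beta h' (size S) S.

Fixpoint ptree_elems (t : ptree) : seq triple :=
  match t with
  | PLeaf s => s
  | PNode p l r => ptree_elems l ++ p :: ptree_elems r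
  end.

Inductive ibltTree :=
| ILeaf of seq triple & iblt
| INode of triple & iblt & ibltTree & ibltTree.

Fixpoint iblt_tree_of (m : nat) (hs : seq (nat -> nat)) (t : ptree) : ibltTree :=
  match t with
  | PLeaf s => ILeaf s (iblt_build m hs s)
  | PNode p l r => INode p (iblt_build m hs (ptree_elems t))
                         (iblt_tree_of m hs l) (iblt_tree_of m hs r)
  end.

Fixpoint iblt_tree_cells (T : ibltTree) : nat :=
  match T with
  | ILeaf _ B => size B
  | INode _ B l r => size B + iblt_tree_cells l + iblt_tree_cells r
  end.

(* Space (in words: one unit per cell / per triple). *)
Definition client_space (m : nat) (hs : seq (nat -> nat)) (S : seq triple) : nat :=
  size (iblt_build m hs S).

Definition server_space (beta m : nat) (hs : seq (nat -> nat)) (h' : nat -> rat)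
    (S : seq triple) : nat :=
  size S + iblt_tree_cells (iblt_tree_of m hs (pct_build beta h' S)).

From mathcomp Require Import all_boot all_order all_algebra.
From mathcomp Require Import zify.

Set Implicit Arguments.
Unset Strict Implicit.
Unset Printing Implicit Defensive.

(* On the server, the
   pivot of every internal node of the protected Cartesian tree is
   unprotected, so each of its two sides keeps at least about [beta/2]
   elements; hence every leaf holds at least [beta/2 - 1] triples.  Summing
   over the [L] leaves and [L - 1] pivots gives [L * beta <= 2 (n + 1)], so the
   tree has [O(n / beta)] nodes, each storing [O(delta)] cells. *)

Fixpoint ptree_nodes (t : ptree) : nat :=
  match t with
  | PLeaf _ => 1
  | PNode _ l r => (ptree_nodes l + ptree_nodes r).+1
  end.

Lemma iblt_tree_cells_of m hs t :
  iblt_tree_cells (iblt_tree_of m hs t) = m * ptree_nodes t.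
Proof.
elim: t => [s|p l IHl r IHr] /=; rewrite /iblt_build size_mkseq ?muln1 //.
by rewrite IHl IHr mulnS mulnDr addnA.
Qed.

Lemma argmin_h_mem h' s p : argmin_h h' s = Some p -> p \in s.
Proof.
elim: s p => [|x s IH] p //=.
case E: (argmin_h h' s) => [y|]; last by move=> [<-]; rewrite mem_head.
by case: ifP => _ [<-]; rewrite inE ?eqxx ?(IH _ E) ?orbT.
Qed.

Lemma count_key_trichotomy k (s : seq triple) :
  count (fun y => tkey y < k) s + count (fun y => k < tkey y) s
    + count (fun y => tkey y == k) s = size s.
Proof. by elim: s => //= x s <-; case: ltngtP; lia. Qed.

Lemma size_key_split (S : seq triple) p : uniq (map tkey S) -> p \in S ->
  size [seq y <- S | tkey y < tkey p] + size [seq y <- S | tkey p < tkey y] + 1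
    = size S.
Proof.
move=> S_uniq pS.
have key_p1 : count (fun y => tkey y == tkey p) S = 1.
  have := count_uniq_mem (tkey p) S_uniq.
  rewrite (map_f tkey pS) count_map => /= <-.
  by apply: eq_count => y; rewrite /= eq_sym.
by rewrite !size_filter -key_p1 count_key_trichotomy.
Qed.

Lemma unprotected_split_sizes beta S p :
  uniq (map tkey S) -> p \in unprotected beta S ->
  beta <= 2 * size [seq y <- S | tkey y < tkey p] + 2 /\
  beta <= 2 * size [seq y <- S | tkey p < tkey y] + 2.
Proof.
move=> S_uniq; rewrite mem_filter /protected /rank negb_or -!ltnNge -size_filter.
case/andP=> /andP [beta_lt_rank rank_le] pS.
have := size_key_split S_uniq pS.
lia.
Qed.

Lemma uniq_keys_filter (a : pred triple) S :
  uniq (map tkey S) -> uniq (map tkey [seq y <- S | a y]).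
Proof. by apply: subseq_uniq; apply/map_subseq/filter_subseq. Qed.

(* A leaf needs [beta <= 2 * size S + 2], which [unprotected_split_sizes]
   passes on to both children; the bound is additive at a pivot because
   [nodes + 1] and [size + 1] both add up over the two children. *)
Lemma pct_build_fuel_nodes beta h' f S :
  uniq (map tkey S) -> beta <= 2 * size S + 2 ->
  (ptree_nodes (pct_build_fuel beta h' f S)).+1 * beta <= 4 * (size S).+1.
Proof.
elim: f S => [|f IH] S S_uniq beta_le /=; first lia.
case: ifP => _ /=; first lia.
case E: (argmin_h h' _) => [p|] /=; last lia.
have p_unprot := argmin_h_mem E.
have pS : p \in S by move: p_unprot; rewrite mem_filter => /andP [].
have [le_below le_above] := unprotected_split_sizes S_uniq p_unprot.
have IHl := IH _ (uniq_keys_filter _ S_uniq) le_below.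
have IHr := IH _ (uniq_keys_filter _ S_uniq) le_above.
have := size_key_split S_uniq pS.
lia.
Qed.

Theorem lemma4 (c0 : nat) (cells : nat -> nat)
  (Hcells : forall delta, cells delta <= c0 * delta) :
  exists C : nat,
    forall (delta beta : nat) (hs : seq (nat -> nat)) (h' : nat -> rat)
           (S : seq triple),
      uniq (map tkey S) ->
      (forall k, (0 <= h' k <= 1)%R) ->
      0 < beta -> beta <= size S ->
      client_space (cells delta) hs S <= C * delta /\
      server_space beta (cells delta) hs h' S * beta
        <= C * (size S * beta + delta * size S).
Proof.
exists (8 * c0 + 1) => delta beta hs h' S S_uniq _ beta_gt0 beta_le.
have cells_le := Hcells delta.
split; first by rewrite /client_space /iblt_build size_mkseq; nia.
rewrite /server_space iblt_tree_cells_of /pct_build.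
have beta_le2 : beta <= 2 * size S + 2 by lia.
have := pct_build_fuel_nodes h' (size S) S_uniq beta_le2.
set N := ptree_nodes _ => nodes_le.
have nodes_beta_le : N * beta <= 7 * size S by lia.
have : cells delta * N * beta <= c0 * delta * (N * beta).
  by rewrite -mulnA leq_mul2r cells_le orbT.
nia.
Qed.
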